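(* Let $n\ge4$ be even, $f>0$, and let $(\mathcal{S},\Gamma)$ be the caterpillar species tree described in the context. Let $\mathcal{T}_1$ be a gene tree drawn from the multispecies coalescent on $(\mathcal{S},\Gamma)$. Then $$\mathrm{Var}\big[d_{\mathrm g}^{\mathcal{T}_1}(a,b)\big]\ \ge\ \frac{n-2}{2}\,\mathrm{Var}\big[X_1\,\big|\,\mathcal{F}_1\big]\;\mathbf{P}[\mathcal{F}].$$
   Context: The caterpillar species tree: for even $n\ge4$, $\mathcal{S}$ is a rooted binary tree with leaves $a,b,x_1,\dots,x_{n/2-1},y_1,\dots,y_{n/2-1}$. Its backbone is the path $(a,w_1),(w_1,z_1),(z_1,w_2),(w_2,z_2),\dots,(w_{(n-2)/2},z_{(n-2)/2}),(z_{(n-2)/2},r)$ from leaf $a$ to the root $r=w_{n/2}$; each $w_i$ ($1\le i\le n/2-1$) has a pendant edge $(w_i,x_i)$ to leaf $x_i$, each $z_i$ has a pendant edge $(z_i,y_i)$ to leaf $y_i$, and $r$ has a pendant edge $(r,b)$ to leaf $b$. Each edge $(w_i,z_i)$ has length $f$; every other edge has length $g=4\log n$. The $i$-th block is the two-edge path $\{(w_i,z_i),(z_i,w_{i+1})\}$, $i=1,\dots,(n-2)/2$. Multispecies coalescent: one lineage per leaf; going backwards in time, within each branch each pair of lineages coalesces at rate 1 independently for the length of the branch; lineages of child populations are pooled at internal nodes; above the root coalescence continues until one lineage remains; $\mathcal{T}_1$ is the resulting unrooted topology and $d_{\mathrm g}^{\mathcal{T}_1}(a,b)$ the number of edges on the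 $a$–$b$ path in it. $\mathcal{F}_i$ is the event that all lineages entering $(z_i,w_{i+1})$ have coalesced into one lineage before reaching $w_{i+1}$, and $\mathcal{F}=\bigcap_i\mathcal{F}_i$. $X_i$ is the number of coalescence events occurring in the populations $(w_i,z_i)$ or $(z_i,w_{i+1})$ (the $i$-th block) in which one of the two merging lineages is ancestral to $a$ (i.e. the number of lineages coalescing into the path between $a$ and $b$ on the $i$-th block). *)

(* The multispecies coalescent (MSC) on the
   caterpillar species tree is modelled as a sequence of continuous-time Markov
   chains (one per backbone population), whose transition semigroup is defined
   literally as the matrix exponential exp(tQ) of the generator Q (rate 1 per
   pair of lineages).  Expectations are computed by backward composition of the
   semigroups. *)
From Stdlib Require Import Reals List Arith Bool ClassicalEpsilon.
Import ListNotations.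
Open Scope R_scope.
Open Scope bool_scope.
Open Scope R_scope.

(* limit of a real sequence (classical choice); unspecified if no limit *)
Definition Rlim (u : nat -> R) : R := epsilon (inhabits 0%R) (fun l => Un_cv u l).

Inductive label : Type := La | Lb | Lx (i : nat) | Ly (i : nat).

Inductive gtree : Type := Leaf (l : label) | Node (t1 t2 : gtree).

Definition label_eqb (l1 l2 : label) : bool :=
  match l1, l2 with
  | La, La => true | Lb, Lb => true
  | Lx i, Lx j => Nat.eqb i j | Ly i, Ly j => Nat.eqb i j
  | _, _ => false
  end.

Fixpoint mem (l : label) (t : gtree) : bool :=
  match t with
  | Leaf l' => label_eqb l l'
  | Node t1 t2 => mem l t1 || mem l t2
  end.

(* number of edges from the root of t down to leaf l (0 if absent) *)
Fixpoint depth (l : label) (t : gtree) : nat :=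
  match t with
  | Leaf _ => 0
  | Node t1 t2 => if mem l t1 then S (depth l t1)
                  else if mem l t2 then S (depth l t2) else 0
  end.

Fixpoint rdist (u v : label) (t : gtree) : nat :=
  match t with
  | Leaf _ => 0
  | Node t1 t2 =>
      if mem u t1 && mem v t1 then rdist u v t1
      else if mem u t2 && mem v t2 then rdist u v t2
      else (depth u t + depth v t)%nat
  end.

(* number of edges between u and v in the unrooted topology of t
   (the degree-2 root is suppressed: if the u-v path goes through the root,
   its two root edges become a single edge) *)
Definition udist (u v : label) (t : gtree) : nat :=
  match t with
  | Leaf _ => 0
  | Node t1 t2 =>
      if (mem u t1 && mem v t1) || (mem u t2 && mem v t2) then rdist u v t
      else (rdist u v t - 1)%nat
  end.

(* state of the process: current lineages, per-population counters of
   coalescences involving the lineage ancestral to a (most recent population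
   first), and numbers of lineages at the top of each finished population
   (most recent first) *)
Definition state : Type := (list gtree * list nat * list nat)%type.

Definition pairs (k : nat) : list (nat * nat) :=
  flat_map (fun j => map (fun i => (i, j)) (seq 0 j)) (seq 0 k).

Definition incr_head (c : list nat) : list nat :=
  match c with [] => [] | x :: r => S x :: r end.

Definition merge (s : state) (p : nat * nat) : state :=
  let '(ls, c, e) := s in
  let '(i, j) := p in
  let ti := nth i ls (Leaf La) in
  let tj := nth j ls (Leaf La) in
  let rest := map snd (filter (fun q => negb (Nat.eqb (fst q) i) && negb (Nat.eqb (fst q) j))
                              (combine (seq 0 (length ls)) ls)) in
  (rest ++ [Node ti tj],
   if mem La ti || mem La tj then incr_head c else c,
   e).

Definition nlin (s : state) : nat := let '(ls, _, _) := s in length ls.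

(* one multiplication by the generator Q, on weighted states:
   Q(s,s) = -(number of pairs), Q(s, merge s p) = 1 for each pair p *)
Definition Qstep (ws : R * state) : list (R * state) :=
  let '(w, s) := ws in
  (w * - INR (length (pairs (nlin s))), s)
    :: map (fun p => (w, merge s p)) (pairs (nlin s)).

(* row s of Q^m, as a weighted list of target states *)
Fixpoint Qpow (m : nat) (s : state) : list (R * state) :=
  match m with
  | O => [(1, s)]
  | S m' => flat_map Qstep (Qpow m' s)
  end.

Definition wsum (h : state -> R) (l : list (R * state)) : R :=
  fold_right (fun ws acc => fst ws * h (snd ws) + acc) 0 l.

(* (exp(tQ) h)(s) = E[h(state after time t) | start in s] *)
Definition semigroup (t : R) (h : state -> R) (s : state) : R :=
  Rlim (fun N => sum_f_R0 (fun m => t ^ m / INR (fact m) * wsum h (Qpow m s)) N).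

(* population of infinite length (above the root) *)
Definition semigroup_inf (h : state -> R) (s : state) : R :=
  Rlim (fun N => semigroup (INR N) h s).

(* a new pendant lineage enters and a new population begins *)
Definition open_pop (l : label) (s : state) : state :=
  let '(ls, c, e) := s in (ls ++ [Leaf l], 0%nat :: c, e).

Definition close_pop (s : state) : state :=
  let '(ls, c, e) := s in (ls, c, length ls :: e).

(* a stage: the lineage entering at the bottom node and the length of the
   population above it (None = infinite, above the root) *)
Definition stage : Type := (label * option R)%type.

Definition run_stage (st : stage) (h : state -> R) (s : state) : R :=
  let '(l, d) := st in
  match d with
  | Some t => semigroup t (fun u => h (close_pop u)) (open_pop l s)
  | None => semigroup_inf (fun u => h (close_pop u)) (open_pop l s)
  end.

Fixpoint run (sts : list stage) (h : state -> R) (s : state) : R :=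
  match sts with
  | [] => h s
  | st :: rest => run_stage st (run rest h) s
  end.

(* the caterpillar: m = (n-2)/2 blocks; block i consists of population
   (w_i,z_i) of length f entered at w_i by x_i, and population (z_i,w_{i+1}) of
   length g entered at z_i by y_i; finally b enters at the root r. *)
Definition nblocks (n : nat) : nat := ((n - 2) / 2)%nat.

Definition caterpillar_stages (n : nat) (f g : R) : list stage :=
  flat_map (fun i => [(Lx i, Some f); (Ly i, Some g)]) (seq 1 (nblocks n))
  ++ [(Lb, None)].

Definition gbranch (n : nat) : R := 4 * ln (INR n).

Definition Ecat (n : nat) (f : R) (H : state -> R) : R :=
  run (caterpillar_stages n f (gbranch n)) H ([Leaf La], [], []).

Definition gene_tree (s : state) : gtree := let '(ls, _, _) := s in hd (Leaf La) ls.

Definition dg_ab (s : state) : R := INR (udist La Lb (gene_tree s)).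

(* X_i : coalescences into the a-lineage in populations (w_i,z_i),(z_i,w_{i+1}) *)
Definition Xi (i : nat) (s : state) : R :=
  let '(_, c, _) := s in
  INR (nth (2 * (i - 1)) (rev c) 0%nat + nth (2 * (i - 1) + 1) (rev c) 0%nat)%nat.

(* F_i : one lineage at the top of population (z_i, w_{i+1}) *)
Definition Fi (i : nat) (s : state) : bool :=
  let '(_, _, e) := s in Nat.eqb (nth (2 * (i - 1) + 1) (rev e) 0%nat) 1%nat.

Definition Fall (n : nat) (s : state) : bool :=
  forallb (fun i => Fi i s) (seq 1 (nblocks n)).

Definition ind (b : bool) : R := if b then 1 else 0.

Definition Var_cat (n : nat) (f : R) (Y : state -> R) : R :=
  Ecat n f (fun s => Y s ^ 2) - (Ecat n f Y) ^ 2.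

Definition Prob_cat (n : nat) (f : R) (A : state -> bool) : R :=
  Ecat n f (fun s => ind (A s)).

Definition CondVar_cat (n : nat) (f : R) (Y : state -> R) (A : state -> bool) : R :=
  let p := Prob_cat n f A in
  Ecat n f (fun s => Y s ^ 2 * ind (A s)) / p
  - (Ecat n f (fun s => Y s * ind (A s)) / p) ^ 2.

(* The expectation operator of the coalescent on the caterpillar is built stage by
   stage from the semigroup [exp (t Q)] and, above the root, the absorption map.  It is
   linear, fixes constants and is positive: [exp (t Q) = exp (- c t) exp (t (Q + c))]
   where [Q + c] is a nonnegative operator on the finitely many reachable states.  A
   relabelling bisimulation shows that every block entered by a single lineage carrying
   [a] behaves like the first block.  On [F] each block hands a single lineage on, the
   depth of [a] grows by [X_i] in block [i] and [b] joins at the root, so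
   [d(a,b) = 1 + X_1 + ... + X_m] with [m = (n-2)/2].  Hence [E[1_F q(d)]] is the [m]-th
   iterate of a one-block operator [K]; for quadratic [q] this gives
   [P[F] = P^m] and [E[1_F (d - c)^2] = P^m ((1 - c + m mu)^2 + m v)], where [P = P[F_1]]
   and [mu], [v] are the conditional mean and variance of [X_1] given [F_1].  Therefore
   [Var d = E[(d - E d)^2] >= E[1_F (d - E d)^2] >= m v P^m]. *)

From Stdlib Require Import Reals List Arith Lia Lra Bool FunctionalExtensionality ClassicalEpsilon.
From Coquelicot Require Import Hierarchy Series.
Import ListNotations.
Open Scope R_scope.

(** * Bookkeeping on lineage lists *)

(* The list left by [merge] once the lineages at positions [i] and [j] are
   removed; positions are counted from [k] so that the recursion goes through. *)
Definition remove2_from {A : Type} (k i j : nat) (l : list A) : list A :=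
  map snd (filter (fun q : nat * A => negb (Nat.eqb (fst q) i) && negb (Nat.eqb (fst q) j))
                  (combine (seq k (length l)) l)).

Definition countb {A : Type} (p : A -> bool) (l : list A) : nat := length (filter p l).

Lemma remove2_from_cons {A} k i j (x : A) l :
  remove2_from k i j (x :: l) =
  if negb (Nat.eqb k i) && negb (Nat.eqb k j) then x :: remove2_from (S k) i j l
  else remove2_from (S k) i j l.
Proof. unfold remove2_from; simpl; destruct (_ && _); reflexivity. Qed.

Lemma map_remove2_from {A B} (g : A -> B) k i j l :
  map g (remove2_from k i j l) = remove2_from k i j (map g l).
Proof.
  revert k; induction l as [|x l IH]; intro k; [reflexivity|].
  simpl map; rewrite !remove2_from_cons.
  destruct (_ && _); simpl; rewrite IH; reflexivity.
Qed.

Lemma in_remove2_from {A} k i j (l : list A) x : In x (remove2_from k i j l) -> In x l.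
Proof.
  revert k; induction l as [|y l IH]; intro k; [easy|].
  rewrite remove2_from_cons; destruct (_ && _); simpl.
  - intros [<-|H]; [now left | right; eapply IH; eauto].
  - intro H; right; eapply IH; eauto.
Qed.

Lemma remove2_from_below {A} k i j (l : list A) :
  (i < k)%nat -> (j < k)%nat -> remove2_from k i j l = l.
Proof.
  revert k; induction l as [|x l IH]; intros k Hi Hj; [reflexivity|].
  rewrite remove2_from_cons.
  replace (Nat.eqb k i) with false by (symmetry; apply Nat.eqb_neq; lia).
  replace (Nat.eqb k j) with false by (symmetry; apply Nat.eqb_neq; lia).
  simpl; rewrite IH by lia; reflexivity.
Qed.

Lemma countb_cons {A} p (x : A) l : countb p (x :: l) = (Nat.b2n (p x) + countb p l)%nat.
Proof. unfold countb; simpl; destruct (p x); reflexivity. Qed.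

Lemma countb_app {A} p (l1 l2 : list A) : countb p (l1 ++ l2) = (countb p l1 + countb p l2)%nat.
Proof. unfold countb; rewrite filter_app, length_app; reflexivity. Qed.

Lemma countb_zero {A} p (l : list A) t : countb p l = 0%nat -> In t l -> p t = false.
Proof.
  induction l as [|x l IH]; [easy|]. rewrite countb_cons.
  destruct (p x) eqn:E; simpl; [lia|]. intros H [<-|Ht]; auto.
Qed.

(* The entry at position [i] only counts when it lies in the window, i.e. [k <= i]. *)
Lemma countb_remove2_from {A} p (d : A) k i j l :
  (i < j)%nat -> (k <= j < k + length l)%nat ->
  countb p l = ((if Nat.leb k i then Nat.b2n (p (nth (i - k) l d)) else 0)
                + Nat.b2n (p (nth (j - k) l d)) + countb p (remove2_from k i j l))%nat.
Proof.
  revert k; induction l as [|x l IH]; intros k Hij Hj; simpl in Hj; [lia|].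
  rewrite remove2_from_cons, countb_cons.
  destruct (Nat.eqb_spec k i) as [->|Hki]; [|destruct (Nat.eqb_spec k j) as [->|Hkj]].
  - rewrite (IH (S i)) by lia. rewrite Nat.leb_refl, Nat.sub_diag.
    replace (Nat.leb (S i) i) with false by (symmetry; apply Nat.leb_gt; lia).
    replace (j - i)%nat with (S (j - S i)) by lia. simpl; lia.
  - rewrite remove2_from_below by lia. rewrite Nat.sub_diag.
    replace (Nat.leb j i) with false by (symmetry; apply Nat.leb_gt; lia). simpl; lia.
  - simpl. rewrite countb_cons, (IH (S k)) by lia.
    replace (j - k)%nat with (S (j - S k)) by lia.
    destruct (Nat.leb_spec k i), (Nat.leb_spec (S k) i); try lia.
    replace (i - k)%nat with (S (i - S k)) by lia. simpl; lia.
Qed.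

Lemma countb_remove2 {A} p (d : A) i j l :
  (i < j < length l)%nat ->
  countb p l = (Nat.b2n (p (nth i l d)) + Nat.b2n (p (nth j l d))
                + countb p (remove2_from 0 i j l))%nat.
Proof. intro H. rewrite (countb_remove2_from p d 0 i j l) by lia. now rewrite !Nat.sub_0_r. Qed.

Lemma length_remove2 {A} i j (l : list A) :
  (i < j < length l)%nat -> length (remove2_from 0 i j l) = (length l - 2)%nat.
Proof.
  intro H. destruct l as [|d l']; [simpl in H; lia|].
  assert (Hall : forall l0 : list A, countb (fun _ => true) l0 = length l0)
    by (induction l0 as [|? ? IH]; [|rewrite countb_cons, IH]; reflexivity).
  pose proof (countb_remove2 (fun _ => true) d i j (d :: l') H) as E.
  rewrite !Hall in E. simpl in *. lia.
Qed.

Lemma pairs_S k : pairs (S k) = pairs k ++ map (fun i => (i, k)) (seq 0 k).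
Proof. unfold pairs; rewrite seq_S, flat_map_app; simpl; now rewrite app_nil_r. Qed.

Lemma pairs_le1 k : (k <= 1)%nat -> pairs k = [].
Proof. intro H; destruct k as [|[|]]; reflexivity || lia. Qed.

Lemma in_pairs k p : In p (pairs k) -> (fst p < snd p < k)%nat.
Proof.
  unfold pairs; rewrite in_flat_map; intros [j [Hj Hp]].
  apply in_map_iff in Hp as [i [<- Hi]]; apply in_seq in Hj, Hi; simpl; lia.
Qed.

Lemma length_pairs k : (2 * length (pairs k) = k * (k - 1))%nat.
Proof.
  induction k; [reflexivity|].
  rewrite pairs_S, length_app, length_map, length_seq. destruct k; simpl in *; lia.
Qed.

Lemma merge_eq ls c e i j :
  merge (ls, c, e) (i, j) =
  (remove2_from 0 i j ls ++ [Node (nth i ls (Leaf La)) (nth j ls (Leaf La))],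
   if mem La (nth i ls (Leaf La)) || mem La (nth j ls (Leaf La)) then incr_head c else c, e).
Proof. reflexivity. Qed.

Lemma nlin_merge s p : In p (pairs (nlin s)) -> nlin (merge s p) = (nlin s - 1)%nat.
Proof.
  destruct s as [[ls c] e], p as [i j]; intro H; apply in_pairs in H; simpl in H.
  rewrite merge_eq; simpl; rewrite length_app, length_remove2 by lia; simpl; lia.
Qed.

(** * The generator and its exponential *)

Definition lsum {A : Type} (l : list A) (g : A -> R) : R :=
  fold_right (fun a acc => g a + acc) 0 l.

Lemma lsum_ext_in {A} (l : list A) g1 g2 :
  (forall a, In a l -> g1 a = g2 a) -> lsum l g1 = lsum l g2.
Proof. induction l; simpl; intro H; [reflexivity|]. rewrite H, IHl; auto. Qed.

Lemma lsum_lin {A} (l : list A) a b g1 g2 :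
  lsum l (fun p => a * g1 p + b * g2 p) = a * lsum l g1 + b * lsum l g2.
Proof. induction l; simpl; [ring|]. rewrite IHl; ring. Qed.

Lemma lsum_const {A} (l : list A) c : lsum l (fun _ => c) = INR (length l) * c.
Proof. induction l; simpl length; [simpl; ring|]. rewrite S_INR; simpl; rewrite IHl; ring. Qed.

Lemma lsum_nonneg {A} (l : list A) g : (forall a, In a l -> 0 <= g a) -> 0 <= lsum l g.
Proof.
  induction l; simpl; intro H; [lra|].
  pose proof (H a (or_introl eq_refl)); pose proof (IHl (fun b h => H b (or_intror h))); lra.
Qed.

Lemma lsum_le {A} (l : list A) g B : (forall a, In a l -> g a <= B) -> lsum l g <= INR (length l) * B.
Proof.
  induction l; intro H; [simpl; lra|]. simpl length; rewrite S_INR; simpl lsum.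
  pose proof (H a (or_introl eq_refl)); pose proof (IHl (fun b h => H b (or_intror h))); lra.
Qed.

Lemma lsum_abs_le {A} (l : list A) g B :
  (forall a, In a l -> Rabs (g a) <= B) -> Rabs (lsum l g) <= INR (length l) * B.
Proof.
  induction l; intro H; [simpl; rewrite Rabs_R0; lra|]. simpl length; rewrite S_INR; simpl lsum.
  pose proof (H a (or_introl eq_refl)); pose proof (IHl (fun b h => H b (or_intror h))).
  pose proof (Rabs_triang (g a) (lsum l g)); lra.
Qed.

Lemma lsum_member {A} (l : list A) g x :
  (forall a, In a l -> 0 <= g a) -> In x l -> g x <= lsum l g.
Proof.
  induction l as [|y l IH]; [easy|]; intros H [<-|Hx]; simpl.
  - pose proof (lsum_nonneg l g (fun a h => H a (or_intror h))); lra.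
  - pose proof (H y (or_introl eq_refl)); pose proof (IH (fun a h => H a (or_intror h)) Hx); lra.
Qed.

Definition rate (s : state) : R := INR (length (pairs (nlin s))).

Lemma rate_nonneg s : 0 <= rate s.
Proof. apply pos_INR. Qed.

Lemma rate_eq s : rate s = INR (nlin s) * (INR (nlin s) - 1) / 2.
Proof.
  unfold rate; pose proof (length_pairs (nlin s)) as H.
  destruct (nlin s) as [|k]; [simpl; field|].
  apply (f_equal INR) in H; rewrite !mult_INR in H.
  replace (S k - 1)%nat with k in H by lia. replace (INR 2) with 2 in H by (simpl; ring).
  rewrite S_INR in *. lra.
Qed.

Lemma rate_pos s : (2 <= nlin s)%nat -> 0 < rate s.
Proof.
  intro H; rewrite rate_eq. assert (2 <= INR (nlin s)) by (apply (le_INR 2); auto).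
  unfold Rdiv; apply Rmult_lt_0_compat; nra.
Qed.

Definition Qop (h : state -> R) (s : state) : R :=
  - rate s * h s + lsum (pairs (nlin s)) (fun p => h (merge s p)).

Definition Qiter (m : nat) (h : state -> R) : state -> R := Nat.iter m Qop h.

Lemma Qop_lin a b h1 h2 s :
  Qop (fun x => a * h1 x + b * h2 x) s = a * Qop h1 s + b * Qop h2 s.
Proof. unfold Qop; rewrite lsum_lin; ring. Qed.

Lemma Qop_const c s : Qop (fun _ => c) s = 0.
Proof. unfold Qop, rate; rewrite lsum_const; ring. Qed.

Lemma Qiter_lin m a b h1 h2 :
  Qiter m (fun x => a * h1 x + b * h2 x) = fun x => a * Qiter m h1 x + b * Qiter m h2 x.
Proof.
  induction m; [reflexivity|]. unfold Qiter in *; simpl; rewrite IHm.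
  apply functional_extensionality; intro; apply Qop_lin.
Qed.

Lemma Qiter_harmonic F : (forall x, Qop F x = 0) -> forall m, Qiter (S m) F = fun _ => 0.
Proof.
  intros HF m; induction m; apply functional_extensionality; intro x; [apply HF|].
  unfold Qiter in *; simpl in *; rewrite IHm; apply Qop_const.
Qed.

Lemma wsum_app h l1 l2 : wsum h (l1 ++ l2) = wsum h l1 + wsum h l2.
Proof. induction l1; simpl; [ring|]. rewrite IHl1; ring. Qed.

Lemma wsum_Qstep h w s : wsum h (Qstep (w, s)) = w * Qop h s.
Proof.
  unfold Qstep, Qop, rate; simpl.
  assert (E : forall l, wsum h (map (fun p => (w, merge s p)) l) = w * lsum l (fun p => h (merge s p)))
    by (induction l; simpl; [ring|]; rewrite IHl; ring).
  rewrite E; ring.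
Qed.

Lemma wsum_Qpow m h s : wsum h (Qpow m s) = Qiter m h s.
Proof.
  revert h s; induction m; intros h s; [simpl; ring|]. simpl Qpow.
  assert (E : forall L, wsum h (flat_map Qstep L) = wsum (Qop h) L).
  { induction L as [|[w x] L IH]; [reflexivity|].
    change (flat_map Qstep ((w, x) :: L)) with (Qstep (w, x) ++ flat_map Qstep L).
    rewrite wsum_app, IH, wsum_Qstep; reflexivity. }
  rewrite E, IHm; unfold Qiter; now rewrite Nat.iter_swap.
Qed.

Definition psum (t : R) (h : state -> R) (s : state) (N : nat) : R :=
  sum_f_R0 (fun m => t ^ m / INR (fact m) * Qiter m h s) N.

Lemma semigroup_eq t h s : semigroup t h s = Rlim (psum t h s).
Proof.
  unfold semigroup, psum; f_equal; apply functional_extensionality; intro N.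
  apply sum_eq; intros; now rewrite wsum_Qpow.
Qed.

Lemma Rlim_eq u l : Un_cv u l -> Rlim u = l.
Proof.
  intro H; unfold Rlim.
  eapply UL_sequence; [apply (epsilon_spec (inhabits 0) (Un_cv u)); now exists l | exact H].
Qed.

Lemma Un_cv_const c : Un_cv (fun _ => c) c.
Proof. intros eps He; exists 0%nat; intros; unfold Rdist; rewrite Rminus_diag, Rabs_R0; lra. Qed.

Lemma semigroup_harmonic t F s : (forall x, Qop F x = 0) -> semigroup t F s = F s.
Proof.
  intro HF; rewrite semigroup_eq; apply Rlim_eq.
  apply Un_cv_ext with (fun _ => F s); [|apply Un_cv_const].
  induction n; unfold psum in *; [simpl; field|].
  rewrite tech5, <- IHn, Qiter_harmonic by auto; ring.
Qed.

Lemma semigroup_const t c s : semigroup t (fun _ => c) s = c.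
Proof. apply semigroup_harmonic; intro; apply Qop_const. Qed.

Inductive Reach : state -> state -> Prop :=
| Reach_refl s : Reach s s
| Reach_merge s p x : In p (pairs (nlin s)) -> Reach (merge s p) x -> Reach s x.

Lemma Reach_step s x p : Reach s x -> In p (pairs (nlin x)) -> Reach s (merge x p).
Proof.
  induction 1; intro Hp; [eapply Reach_merge; [exact Hp | apply Reach_refl]|].
  eapply Reach_merge; eauto.
Qed.

Lemma rate_Reach s x : Reach s x -> rate x <= rate s.
Proof.
  intro H; unfold rate; apply le_INR.
  assert (Hle : (nlin x <= nlin s)%nat)
    by (induction H; [lia | rewrite nlin_merge in IHReach by auto; lia]).
  pose proof (length_pairs (nlin x)); pose proof (length_pairs (nlin s)).
  assert (nlin x * (nlin x - 1) <= nlin s * (nlin s - 1))%nat by (apply Nat.mul_le_mono; lia).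
  lia.
Qed.

Fixpoint descendants (k : nat) (s : state) : list state :=
  s :: match k with
       | O => []
       | S k' => flat_map (fun p => descendants k' (merge s p)) (pairs (nlin s))
       end.

Lemma Reach_descendants s x : Reach s x -> In x (descendants (nlin s) s).
Proof.
  induction 1 as [s|s p x Hp _ IH]; [destruct (nlin s); now left|].
  pose proof (in_pairs _ _ Hp). rewrite nlin_merge in IH by auto.
  destruct (nlin s) as [|k] eqn:E; [lia|]. right. apply in_flat_map.
  exists p; split; [now rewrite E|]. now rewrite Nat.sub_succ, Nat.sub_0_r in IH.
Qed.

(* Only finitely many states are reachable, hence every function is bounded on them. *)
Lemma Reach_bounded h s : exists M, 0 <= M /\ forall x, Reach s x -> Rabs (h x) <= M.
Proof.
  set (l := descendants (nlin s) s).
  assert (Hpos : forall a, In a l -> 0 <= Rabs (h a)) by (intros; apply Rabs_pos).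
  exists (lsum l (fun x => Rabs (h x))); split; [now apply lsum_nonneg|].
  intros x Hx; apply (lsum_member l (fun y => Rabs (h y))); auto; now apply Reach_descendants.
Qed.

Lemma Qiter_bound h s M : (forall x, Reach s x -> Rabs (h x) <= M) ->
  forall m x, Reach s x -> Rabs (Qiter m h x) <= (2 * rate s) ^ m * M.
Proof.
  intros Hh m; induction m; intros x Hx; [simpl; rewrite Rmult_1_l; auto|].
  change (Qiter (S m) h x) with (Qop (Qiter m h) x); unfold Qop.
  pose proof (IHm x Hx) as H1.
  set (B := (2 * rate s) ^ m * M) in *.
  assert (H2 : Rabs (lsum (pairs (nlin x)) (fun p => Qiter m h (merge x p))) <= rate x * B)
    by (apply lsum_abs_le; intros p Hp; apply IHm, Reach_step; auto).
  pose proof (rate_Reach s x Hx); pose proof (rate_nonneg x).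
  assert (0 <= B) by (pose proof (Rabs_pos (Qiter m h x)); lra).
  pose proof (Rabs_triang (- rate x * Qiter m h x)
                          (lsum (pairs (nlin x)) (fun p => Qiter m h (merge x p))))
    as Htri.
  rewrite Rabs_mult, Rabs_Ropp, (Rabs_right (rate x)) in Htri by lra.
  replace ((2 * rate s) ^ S m * M) with (2 * (rate s * B)) by (unfold B; simpl; ring).
  assert (rate x * Rabs (Qiter m h x) <= rate s * B) by (apply Rmult_le_compat; auto; apply Rabs_pos).
  assert (rate x * B <= rate s * B) by (apply Rmult_le_compat_r; auto).
  lra.
Qed.

Lemma is_series_exp x : is_series (fun k => x ^ k / INR (fact k)) (exp x).
Proof.
  apply is_series_Reals; eapply Un_cv_ext; [|apply E1_cvg].
  intro N; unfold E1; apply sum_eq; intros; unfold Rdiv; ring.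
Qed.

Lemma ex_series_exp_scal x M : ex_series (fun k => x ^ k / INR (fact k) * M).
Proof. apply ex_series_scal_r; eexists; apply is_series_exp. Qed.

Lemma psum_cv t h s : exists l, Un_cv (psum t h s) l.
Proof.
  destruct (Reach_bounded h s) as [M [HM Hh]].
  assert (Hex : ex_series (fun m => t ^ m / INR (fact m) * Qiter m h s)).
  { apply (@ex_series_le R_AbsRing R_CompleteNormedModule _
             (fun k => (2 * rate s * Rabs t) ^ k / INR (fact k) * M)); [|apply ex_series_exp_scal].
    intro m; change (norm ?x) with (Rabs x).
    pose proof (Qiter_bound h s M Hh m s (Reach_refl s)).
    pose proof (INR_fact_lt_0 m).
    unfold Rdiv; rewrite !Rabs_mult, Rabs_inv, <- RPow_abs, Rpow_mult_distr.
    rewrite (Rabs_right (INR (fact m))) by lra.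
    replace ((2 * rate s) ^ m * Rabs t ^ m * / INR (fact m) * M)
      with (Rabs t ^ m * / INR (fact m) * ((2 * rate s) ^ m * M)) by ring.
    apply Rmult_le_compat_l; auto.
    apply Rmult_le_pos; [apply pow_le, Rabs_pos | left; apply Rinv_0_lt_compat; lra]. }
  destruct Hex as [l Hl]; exists l; now apply is_series_Reals.
Qed.

Lemma semigroup_cv t h s : Un_cv (psum t h s) (semigroup t h s).
Proof. destruct (psum_cv t h s) as [l Hl]; now rewrite semigroup_eq, (Rlim_eq _ l Hl). Qed.

Lemma semigroup_lin t a b h1 h2 s :
  semigroup t (fun x => a * h1 x + b * h2 x) s = a * semigroup t h1 s + b * semigroup t h2 s.
Proof.
  rewrite semigroup_eq; apply Rlim_eq.
  apply Un_cv_ext with (fun N => a * psum t h1 s N + b * psum t h2 s N).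
  - intro N; unfold psum; induction N; cbn [sum_f_R0]; rewrite Qiter_lin; [ring|].
    rewrite <- IHN; ring.
  - apply CV_plus; apply CV_mult; try apply Un_cv_const; apply semigroup_cv.
Qed.

Definition bisim (Rel : state -> state -> Prop) : Prop :=
  forall x x', Rel x x' -> nlin x = nlin x' /\
    forall p, In p (pairs (nlin x)) -> Rel (merge x p) (merge x' p).

Lemma semigroup_bisim Rel t h h' : bisim Rel -> (forall x x', Rel x x' -> h x = h' x') ->
  forall x x', Rel x x' -> semigroup t h x = semigroup t h' x'.
Proof.
  intros HB Hh x x' Hx; rewrite !semigroup_eq; f_equal.
  apply functional_extensionality; intro N; unfold psum; apply sum_eq; intros m _.
  f_equal. revert x x' Hx; induction m; intros x x' Hx; [now apply Hh|].
  change (Qop (Qiter m h) x = Qop (Qiter m h') x').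
  destruct (HB x x' Hx) as [Hn Hm]; unfold Qop, rate; rewrite <- Hn, (IHm x x' Hx).
  f_equal; apply lsum_ext_in; auto.
Qed.

Lemma semigroup_inf_bisim Rel h h' : bisim Rel -> (forall x x', Rel x x' -> h x = h' x') ->
  forall x x', Rel x x' -> semigroup_inf h x = semigroup_inf h' x'.
Proof.
  intros HB Hh x x' Hx; unfold semigroup_inf; f_equal.
  apply functional_extensionality; intro N; eapply semigroup_bisim; eauto.
Qed.

(* [Q + c], a nonnegative operator on the states reachable from [s] once [c] dominates
   all their rates. *)
Definition Qshift (c : R) (F : state -> R) (x : state) : R := Qop F x + c * F x.

Definition Qshift_iter (c : R) (j : nat) (h : state -> R) : state -> R := Nat.iter j (Qshift c) h.

Section Shifted_generator.

Variables (s : state) (c : R) (h : state -> R).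
Hypothesis rate_le_c : forall x, Reach s x -> rate x <= c.

Lemma Qshift_iter_nonneg : (forall x, Reach s x -> 0 <= h x) ->
  forall j x, Reach s x -> 0 <= Qshift_iter c j h x.
Proof.
  intros Hh j; induction j; intros x Hx; [now apply Hh|].
  change (0 <= Qop (Qshift_iter c j h) x + c * Qshift_iter c j h x); unfold Qop.
  pose proof (rate_le_c x Hx); pose proof (IHj x Hx).
  assert (0 <= lsum (pairs (nlin x)) (fun p => Qshift_iter c j h (merge x p)))
    by (apply lsum_nonneg; intros p Hp; apply IHj, Reach_step; auto).
  nra.
Qed.

Lemma Qshift_iter_le M : (forall x, Reach s x -> h x <= M) ->
  forall j x, Reach s x -> Qshift_iter c j h x <= c ^ j * M.
Proof.
  intros Hh j; induction j; intros x Hx; [simpl; rewrite Rmult_1_l; auto|].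
  change (Qop (Qshift_iter c j h) x + c * Qshift_iter c j h x <= c ^ S j * M); unfold Qop.
  pose proof (rate_le_c x Hx); pose proof (rate_nonneg x); pose proof (IHj x Hx).
  assert (lsum (pairs (nlin x)) (fun p => Qshift_iter c j h (merge x p)) <= rate x * (c ^ j * M))
    by (apply lsum_le; intros p Hp; apply IHj, Reach_step; auto).
  simpl; nra.
Qed.

End Shifted_generator.

Lemma C_n_0 n : Binomial.C n 0 = 1.
Proof. unfold C; rewrite Nat.sub_0_r; simpl; field; apply INR_fact_neq_0. Qed.

Lemma C_n_n n : Binomial.C n n = 1.
Proof. unfold C; rewrite Nat.sub_diag; simpl; field; apply INR_fact_neq_0. Qed.

(* Pascal's rule, in the form of one step of the binomial expansion of [(S + a)^n]. *)
Lemma binomial_step (a : R) (P : nat -> R) n :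
  sum_f_R0 (fun k => Binomial.C n k * a ^ k * (P (S (n - k)) + a * P (n - k)%nat)) n =
  sum_f_R0 (fun k => Binomial.C (S n) k * a ^ k * P (S n - k)%nat) (S n).
Proof.
  destruct n as [|n]; [simpl; rewrite !C_n_0, C_n_n; ring|].
  assert (EA : sum_f_R0 (fun k => Binomial.C (S n) k * a ^ k * P (S (S n - k))) (S n)
               = P (S (S n))
                 + sum_f_R0 (fun i => Binomial.C (S n) (S i) * a ^ S i * P (S n - i)%nat) n).
  { rewrite decomp_sum by lia. rewrite C_n_0, Nat.sub_0_r. simpl pred. f_equal; [ring|].
    apply sum_eq; intros i Hi. now replace (S (S n - S i)) with (S n - i)%nat by lia. }
  assert (EB : sum_f_R0 (fun k => Binomial.C (S n) k * a ^ S k * P (S n - k)%nat) (S n)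
               = sum_f_R0 (fun i => Binomial.C (S n) i * a ^ S i * P (S n - i)%nat) n
                 + a ^ S (S n) * P 0%nat).
  { rewrite tech5. now rewrite Nat.sub_diag, C_n_n, Rmult_1_l. }
  assert (ER : sum_f_R0 (fun k => Binomial.C (S (S n)) k * a ^ k * P (S (S n) - k)%nat) (S (S n))
               = P (S (S n)) + sum_f_R0 (fun i => Binomial.C (S n) i * a ^ S i * P (S n - i)%nat) n
                 + sum_f_R0 (fun i => Binomial.C (S n) (S i) * a ^ S i * P (S n - i)%nat) n
                 + a ^ S (S n) * P 0%nat).
  { rewrite decomp_sum by lia. simpl pred. rewrite tech5, C_n_0, C_n_n, Nat.sub_0_r, Nat.sub_diag.
    rewrite (sum_eq _ (fun i => Binomial.C (S n) i * a ^ S i * P (S n - i)%nat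
                              + Binomial.C (S n) (S i) * a ^ S i * P (S n - i)%nat))
      by (intros i Hi; rewrite <- pascal by lia; simpl; ring).
    rewrite plus_sum; simpl; ring. }
  rewrite ER, (sum_eq _ (fun k => Binomial.C (S n) k * a ^ k * P (S (S n - k))
                               + Binomial.C (S n) k * a ^ S k * P (S n - k)%nat))
    by (intros; simpl; ring).
  rewrite plus_sum, EA, EB; ring.
Qed.

Lemma Qop_sum (al : nat -> R) (F : nat -> state -> R) n x :
  Qop (fun y => sum_f_R0 (fun k => al k * F k y) n) x = sum_f_R0 (fun k => al k * Qop (F k) x) n.
Proof.
  induction n; simpl.
  - replace (fun y => al 0%nat * F 0%nat y) with (fun y => al 0%nat * F 0%nat y + 0 * F 0%nat y)
      by (apply functional_extensionality; intro; ring).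
    rewrite Qop_lin; ring.
  - replace (fun y => sum_f_R0 (fun k => al k * F k y) n + al (S n) * F (S n) y)
      with (fun y => 1 * sum_f_R0 (fun k => al k * F k y) n + al (S n) * F (S n) y)
      by (apply functional_extensionality; intro; ring).
    rewrite Qop_lin, IHn; ring.
Qed.

Lemma Qiter_binomial c h n x :
  Qiter n h x = sum_f_R0 (fun k => Binomial.C n k * (- c) ^ k * Qshift_iter c (n - k) h x) n.
Proof.
  revert x; induction n; intro x; [simpl; rewrite C_n_0; ring|].
  change (Qiter (S n) h x) with (Qop (Qiter n h) x).
  replace (Qiter n h) with
    (fun y => sum_f_R0 (fun k => Binomial.C n k * (- c) ^ k * Qshift_iter c (n - k) h y) n)
    by (apply functional_extensionality; intro; now rewrite IHn).
  rewrite Qop_sum, <- (binomial_step (- c) (fun j => Qshift_iter c j h x) n).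
  apply sum_eq; intros k _.
  change (Qshift_iter c (S (n - k)) h x) with (Qshift c (Qshift_iter c (n - k) h) x); unfold Qshift.
  change (fun y => Qshift_iter c (n - k) h y) with (Qshift_iter c (n - k) h); ring.
Qed.

Lemma exp_cauchy_term c t h s n :
  sum_f_R0 (fun k => (- c * t) ^ k / INR (fact k)
                     * (t ^ (n - k) / INR (fact (n - k)) * Qshift_iter c (n - k) h s)) n
  = t ^ n / INR (fact n) * Qiter n h s.
Proof.
  rewrite (Qiter_binomial c), scal_sum; apply sum_eq; intros k Hk.
  replace (t ^ n) with (t ^ k * t ^ (n - k)) by (rewrite <- pow_add; f_equal; lia).
  unfold Binomial.C; rewrite Rpow_mult_distr.
  pose proof (INR_fact_neq_0 k); pose proof (INR_fact_neq_0 (n - k)); pose proof (INR_fact_neq_0 n).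
  field; auto.
Qed.

Lemma shifted_series_nonneg t h s : 0 <= t -> (forall x, Reach s x -> 0 <= h x) ->
  let b := fun j => t ^ j / INR (fact j) * Qshift_iter (rate s) j h s in
  (forall j, 0 <= b j) /\ exists LB, 0 <= LB /\ is_series b LB.
Proof.
  intros Ht Hh b; set (c := rate s) in b.
  assert (Hc : forall x, Reach s x -> rate x <= c) by (intros; now apply rate_Reach).
  destruct (Reach_bounded h s) as [M [HM HMb]].
  assert (Hfact : forall j, 0 < / INR (fact j)) by (intro; apply Rinv_0_lt_compat, INR_fact_lt_0).
  assert (Hb0 : forall j, 0 <= b j).
  { intro j; apply Rmult_le_pos; [|exact (Qshift_iter_nonneg s c h Hc Hh j s (Reach_refl s))].
    apply Rmult_le_pos; [now apply pow_le | now left]. }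
  split; [exact Hb0|].
  destruct (@ex_series_le R_AbsRing R_CompleteNormedModule b (fun j => (c * t) ^ j / INR (fact j) * M))
    as [LB HLB]; [|apply ex_series_exp_scal|].
  { intro j; change (norm ?x) with (Rabs x); rewrite Rabs_right by (apply Rle_ge; auto).
    pose proof (Qshift_iter_le s c h Hc M (fun x Hx => Rle_trans _ _ _ (Rle_abs _) (HMb x Hx)) j s
                  (Reach_refl s)).
    unfold b, Rdiv; rewrite Rpow_mult_distr.
    replace (c ^ j * t ^ j * / INR (fact j) * M) with (t ^ j * / INR (fact j) * (c ^ j * M)) by ring.
    apply Rmult_le_compat_l; auto. apply Rmult_le_pos; [now apply pow_le | now left]. }
  exists LB; split; auto.
  apply is_series_Reals in HLB; exact (Rle_trans _ _ _ (Hb0 0%nat) (sum_incr b 0 LB HLB Hb0)).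
Qed.

(* [exp (t Q) = exp (- c t) exp (t (Q + c))] with [c] the rate of [s]: a Cauchy product
   of an exponential and a series of nonnegative terms. *)
Lemma semigroup_nonneg t h s : 0 <= t -> (forall x, Reach s x -> 0 <= h x) -> 0 <= semigroup t h s.
Proof.
  intros Ht Hh; set (c := rate s); pose proof (rate_nonneg s) as Hc.
  destruct (shifted_series_nonneg t h s Ht Hh) as [Hb0 [LB [HLB0 HLB]]].
  assert (Habs : ex_series (fun k => Rabs ((- c * t) ^ k / INR (fact k)))).
  { eapply ex_series_ext; [|apply (ex_series_exp_scal (c * t) 1)]; intro k.
    unfold Rdiv; rewrite Rabs_mult, <- RPow_abs, Rabs_inv, (Rabs_right (INR _))
      by (apply Rle_ge, pos_INR).
    replace (Rabs (- c * t)) with (c * t) by (rewrite Rabs_mult, Rabs_Ropp, !Rabs_right; unfold c; lra).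
    apply Rmult_1_r. }
  assert (Hbabs : ex_series (fun k => Rabs (t ^ k / INR (fact k) * Qshift_iter c k h s))).
  { exists LB; eapply is_series_ext; [|exact HLB]; intro; rewrite Rabs_right; auto; apply Rle_ge, Hb0. }
  pose proof (is_series_mult _ _ _ _ (is_series_exp (- c * t)) HLB Habs Hbabs) as Hm.
  apply (is_series_ext _ _ _ (fun n => exp_cauchy_term c t h s n)), is_series_Reals in Hm.
  rewrite semigroup_eq, (Rlim_eq _ (exp (- c * t) * LB)) by exact Hm.
  apply Rmult_le_pos; [left; apply exp_pos | auto].
Qed.

(* The value of [h] at absorption, i.e. once a single lineage is left: each step
   averages over the possible merges; the fuel [k] bounds the number of steps. *)
Fixpoint absorbF (k : nat) (h : state -> R) (s : state) : R :=
  match k with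
  | O => h s
  | S k' => if Nat.leb (nlin s) 1 then h s
            else / rate s * lsum (pairs (nlin s)) (fun p => absorbF k' h (merge s p))
  end.

Definition absorb (h : state -> R) (s : state) : R := absorbF (nlin s) h s.

Lemma absorb_le1 h s : (nlin s <= 1)%nat -> absorb h s = h s.
Proof.
  unfold absorb; destruct (nlin s) as [|[|k]] eqn:E; intro H; try lia; simpl; auto. now rewrite E.
Qed.

Lemma absorb_ge2 h s : (2 <= nlin s)%nat ->
  absorb h s = / rate s * lsum (pairs (nlin s)) (fun p => absorb h (merge s p)).
Proof.
  intro H; unfold absorb at 1; destruct (nlin s) as [|k] eqn:E; [lia|].
  simpl; rewrite E; replace (Nat.leb (S k) 1) with false by (symmetry; apply Nat.leb_gt; lia).
  f_equal; apply lsum_ext_in; intros p Hp; unfold absorb.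
  rewrite nlin_merge, E by (now rewrite E); simpl; now rewrite Nat.sub_0_r.
Qed.

Lemma Qop_absorb h s : Qop (absorb h) s = 0.
Proof.
  unfold Qop; destruct (Nat.le_gt_cases (nlin s) 1) as [H|H].
  - unfold rate; rewrite pairs_le1 by auto; simpl; ring.
  - rewrite (absorb_ge2 h s) by lia; pose proof (rate_pos s ltac:(lia)); field; lra.
Qed.

Lemma absorb_lin a b h1 h2 s :
  absorb (fun x => a * h1 x + b * h2 x) s = a * absorb h1 s + b * absorb h2 s.
Proof.
  unfold absorb; generalize (nlin s); intro k; revert s; induction k; intro s; simpl; auto.
  destruct (Nat.leb (nlin s) 1); auto.
  rewrite (lsum_ext_in _ _ (fun p => a * absorbF k h1 (merge s p) + b * absorbF k h2 (merge s p)))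
    by auto.
  rewrite lsum_lin; ring.
Qed.

Lemma absorb_nonneg h s : (forall x, 0 <= h x) -> 0 <= absorb h s.
Proof.
  intro Hh; unfold absorb; generalize (nlin s); intro k; revert s; induction k; intro s; simpl; auto.
  destruct (Nat.leb_spec (nlin s) 1); auto.
  apply Rmult_le_pos; [left; apply Rinv_0_lt_compat, rate_pos; lia | now apply lsum_nonneg].
Qed.

(* An eigenfunction of [Q] for the eigenvalue [-1] that is [>= 1] as soon as two
   lineages remain: it controls the speed of absorption. *)
Definition psi_n (k : nat) : R := if Nat.leb k 1 then 0 else 3 * (INR k - 1) / (INR k + 1).

Definition psi (x : state) : R := psi_n (nlin x).

Lemma Qop_psi x : Qop psi x = - psi x.
Proof.
  unfold Qop, psi; destruct (Nat.leb_spec (nlin x) 1) as [H|H].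
  - unfold rate, psi_n; rewrite pairs_le1 by auto.
    replace (Nat.leb (nlin x) 1) with true by (symmetry; now apply Nat.leb_le). simpl; ring.
  - rewrite (lsum_ext_in _ _ (fun _ => psi_n (nlin x - 1))) by (intros; now rewrite nlin_merge).
    rewrite lsum_const; fold (rate x); rewrite rate_eq; unfold psi_n.
    replace (Nat.leb (nlin x) 1) with false by (symmetry; now apply Nat.leb_gt).
    destruct (Nat.eq_dec (nlin x) 2) as [->|E]; [simpl; field|].
    replace (Nat.leb (nlin x - 1) 1) with false by (symmetry; apply Nat.leb_gt; lia).
    rewrite minus_INR by lia. assert (2 < INR (nlin x)) by (apply (lt_INR 2); lia).
    simpl (INR 1); field; lra.
Qed.

Lemma psi_nonneg x : 0 <= psi x.
Proof.
  unfold psi, psi_n; destruct (Nat.leb_spec (nlin x) 1); [lra|].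
  assert (1 < INR (nlin x)) by (apply (lt_INR 1); lia).
  unfold Rdiv; apply Rmult_le_pos; [lra | left; apply Rinv_0_lt_compat; lra].
Qed.

Lemma psi_ge1 x : (2 <= nlin x)%nat -> 1 <= psi x.
Proof.
  intro H; unfold psi, psi_n.
  replace (Nat.leb (nlin x) 1) with false by (symmetry; apply Nat.leb_gt; lia).
  assert (2 <= INR (nlin x)) by (apply (le_INR 2); auto).
  apply Rmult_le_reg_r with (INR (nlin x) + 1); [lra|]. unfold Rdiv; rewrite Rmult_assoc, Rinv_l; lra.
Qed.

Lemma semigroup_psi t s : semigroup t psi s = exp (- t) * psi s.
Proof.
  rewrite semigroup_eq; apply Rlim_eq.
  assert (HQ : forall m, Qiter m psi = fun x => (-1) ^ m * psi x).
  { induction m; apply functional_extensionality; intro x; [simpl; ring|].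
    change (Qop (Qiter m psi) x = (-1) ^ S m * psi x); rewrite IHm.
    replace (fun y => (-1) ^ m * psi y) with (fun y => (-1) ^ m * psi y + 0 * psi y)
      by (apply functional_extensionality; intro; ring).
    rewrite Qop_lin, Qop_psi; simpl; ring. }
  pose proof (is_series_scal_r (psi s) _ _ (is_series_exp (- t))) as H.
  apply is_series_Reals in H; eapply Un_cv_ext; [|exact H]; intro N; unfold psum.
  apply sum_eq; intros m _; rewrite HQ.
  replace (- t) with (-1 * t) by ring; rewrite Rpow_mult_distr; unfold Rdiv; ring.
Qed.

Lemma semigroup_decay t r s M : 0 <= t ->
  (forall x, Reach s x -> Rabs (r x) <= M * psi x) ->
  Rabs (semigroup t r s) <= M * (exp (- t) * psi s).
Proof.
  intros Ht Hr.
  assert (Hpm : forall e, e = 1 \/ e = -1 -> 0 <= M * (exp (- t) * psi s) + e * semigroup t r s).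
  { intros e He; rewrite <- semigroup_psi, <- semigroup_lin; apply semigroup_nonneg; auto.
    intros x Hx; pose proof (Hr x Hx); pose proof (Rle_abs (r x)); pose proof (Rle_abs (- r x)).
    rewrite Rabs_Ropp in *; destruct He as [-> | ->]; lra. }
  pose proof (Hpm 1 (or_introl eq_refl)); pose proof (Hpm (-1) (or_intror eq_refl)).
  apply Rabs_le; lra.
Qed.

Lemma Un_cv_exp_decay (u : nat -> R) l K :
  (forall N, Rabs (u N - l) <= K * exp (- INR N)) -> Un_cv u l.
Proof.
  intros H eps He.
  assert (E : forall N, exp (- INR N) = exp (- 1) ^ N).
  { induction N; [simpl; now rewrite Ropp_0, exp_0|].
    rewrite S_INR, Ropp_plus_distr, exp_plus, IHN.
    replace (- (1)) with (-1) by ring; simpl; ring. }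
  assert (on_Fall_dg : Rabs (exp (- 1)) < 1).
  { rewrite Rabs_right by (left; apply exp_pos). rewrite <- exp_0; apply exp_increasing; lra. }
  assert (HK : 0 <= K).
  { pose proof (H 0%nat) as H0; simpl in H0; rewrite Ropp_0, exp_0 in H0.
    pose proof (Rabs_pos (u 0%nat - l)); lra. }
  assert (Hx : 0 < eps / (K + 1)) by (apply Rdiv_lt_0_compat; lra).
  destruct (pow_lt_1_zero _ on_Fall_dg _ Hx) as [N HN].
  exists N; intros n Hn; unfold Rdist; specialize (HN n Hn); specialize (H n).
  rewrite E, Rabs_right in * by (apply Rle_ge, pow_le; left; apply exp_pos).
  apply Rle_lt_trans with (K * (eps / (K + 1))); [nra|].
  apply Rlt_le_trans with ((K + 1) * (eps / (K + 1))); [nra | right; field; lra].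
Qed.

Lemma semigroup_inf_absorb h s : semigroup_inf h s = absorb h s.
Proof.
  unfold semigroup_inf; apply Rlim_eq.
  set (r := fun x => h x - absorb h x).
  destruct (Reach_bounded r s) as [M [HM HMb]].
  apply Un_cv_exp_decay with (M * psi s); intro N.
  assert (E : semigroup (INR N) h s = absorb h s + semigroup (INR N) r s).
  { rewrite <- (semigroup_harmonic (INR N) (absorb h) s) at 1 by apply Qop_absorb.
    transitivity (semigroup (INR N) (fun x => 1 * absorb h x + 1 * r x) s);
      [f_equal; apply functional_extensionality; intro; unfold r; ring | rewrite semigroup_lin; ring]. }
  rewrite E; replace (absorb h s + semigroup (INR N) r s - absorb h s) with (semigroup (INR N) r s)
    by ring.
  replace (M * psi s * exp (- INR N)) with (M * (exp (- INR N) * psi s)) by ring.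
  apply semigroup_decay; [apply pos_INR|].
  intros x Hx; destruct (Nat.le_gt_cases (nlin x) 1) as [Hl|Hl].
  - unfold r; rewrite absorb_le1, Rminus_diag, Rabs_R0 by auto.
    apply Rmult_le_pos; [auto | apply psi_nonneg].
  - pose proof (psi_ge1 x ltac:(lia)); pose proof (HMb x Hx); nra.
Qed.

(** * Running the stages *)

Lemma run_stage_eq l d h s :
  run_stage (l, d) h s =
  match d with
  | Some t => semigroup t (fun u => h (close_pop u)) (open_pop l s)
  | None => absorb (fun u => h (close_pop u)) (open_pop l s)
  end.
Proof. destruct d; simpl; auto. apply semigroup_inf_absorb. Qed.

Lemma run_ext sts h1 h2 s : (forall x, h1 x = h2 x) -> run sts h1 s = run sts h2 s.
Proof. intro H; f_equal; now apply functional_extensionality. Qed.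

Lemma run_lin sts a b h1 h2 s :
  run sts (fun x => a * h1 x + b * h2 x) s = a * run sts h1 s + b * run sts h2 s.
Proof.
  revert s; induction sts as [|[l d] sts IH]; intro s; cbn [run]; auto.
  replace (run sts (fun x => a * h1 x + b * h2 x)) with (fun x => a * run sts h1 x + b * run sts h2 x)
    by (apply functional_extensionality; intro; now rewrite IH).
  rewrite !run_stage_eq; destruct d; [apply semigroup_lin | apply absorb_lin].
Qed.

Lemma run_const sts c s : run sts (fun _ => c) s = c.
Proof.
  revert s; induction sts as [|[l d] sts IH]; intro s; cbn [run]; auto.
  replace (run sts (fun _ => c)) with (fun _ : state => c) by (apply functional_extensionality; auto).
  rewrite run_stage_eq; destruct d; [apply semigroup_const|].
  rewrite <- semigroup_inf_absorb; unfold semigroup_inf; apply Rlim_eq.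
  apply Un_cv_ext with (fun _ => c); [intro; symmetry; apply semigroup_const | apply Un_cv_const].
Qed.

Lemma run_nonneg sts h s :
  (forall l t, In (l, Some t) sts -> 0 <= t) -> (forall x, 0 <= h x) -> 0 <= run sts h s.
Proof.
  revert s; induction sts as [|[l d] sts IH]; intros s Hd Hh; cbn [run]; auto.
  assert (Hr : forall x, 0 <= run sts h x) by (intro; apply IH; auto; intros; eapply Hd; right; eauto).
  rewrite run_stage_eq; destruct d as [t|].
  - apply semigroup_nonneg; [eapply Hd; now left | auto].
  - now apply absorb_nonneg.
Qed.

Lemma run_app l1 l2 h s : run (l1 ++ l2) h s = run l1 (run l2 h) s.
Proof.
  revert s; induction l1 as [|st l1 IH]; intro s; cbn [run app]; auto.
  f_equal; apply functional_extensionality; intro; apply IH.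
Qed.

Lemma run_stage_bisim Rel l l' d h h' x x' :
  bisim Rel -> Rel (open_pop l x) (open_pop l' x') ->
  (forall y y', Rel y y' -> h (close_pop y) = h' (close_pop y')) ->
  run_stage (l, d) h x = run_stage (l', d) h' x'.
Proof.
  intros HB Ho Hc; simpl; destruct d.
  - eapply semigroup_bisim; eauto.
  - eapply semigroup_inf_bisim; eauto.
Qed.

(* An invariant of the coalescence moves is a bisimulation on its diagonal. *)
Lemma run_stage_inv (I : state -> Prop) l d h h' x :
  (forall y p, I y -> In p (pairs (nlin y)) -> I (merge y p)) ->
  I (open_pop l x) -> (forall y, I y -> h (close_pop y) = h' (close_pop y)) ->
  run_stage (l, d) h x = run_stage (l, d) h' x.
Proof.
  intros HI Ho Hc; apply (run_stage_bisim (fun y y' => y = y' /\ I y)).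
  - intros y y' [<- Hy]; split; auto.
  - now split.
  - intros y y' [<- Hy]; auto.
Qed.

Lemma run_inv (I Imid : state -> Prop) sts :
  (forall l d x, In (l, d) sts -> I x -> Imid (open_pop l x)) ->
  (forall y p, Imid y -> In p (pairs (nlin y)) -> Imid (merge y p)) ->
  (forall y, Imid y -> I (close_pop y)) ->
  forall h h', (forall x, I x -> h x = h' x) -> forall x, I x -> run sts h x = run sts h' x.
Proof.
  intros Ho HM Hc; induction sts as [|[l d] sts IH]; intros h h' Hh x Hx; cbn [run]; auto.
  apply run_stage_inv with Imid; auto.
  - eapply Ho; [now left | auto].
  - intros y Hy; apply IH; auto; intros; eapply Ho; [right|]; eauto.
Qed.

(** * The lineage ancestral to [a] *)

Definition lineages (x : state) : list gtree := let '(ls, _, _) := x in ls.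
Definition a_coal (x : state) : list nat := let '(_, c, _) := x in c.
Definition top_sizes (x : state) : list nat := let '(_, _, e) := x in e.

Lemma top_sizes_open l x : top_sizes (open_pop l x) = top_sizes x.
Proof. now destruct x as [[ls c] e]. Qed.
Lemma top_sizes_close x : top_sizes (close_pop x) = length (lineages x) :: top_sizes x.
Proof. now destruct x as [[ls c] e]. Qed.
Lemma top_sizes_merge x p : top_sizes (merge x p) = top_sizes x.
Proof. now destruct x as [[ls c] e], p. Qed.
Lemma a_coal_open l x : a_coal (open_pop l x) = 0%nat :: a_coal x.
Proof. now destruct x as [[ls c] e]. Qed.
Lemma a_coal_close x : a_coal (close_pop x) = a_coal x.
Proof. now destruct x as [[ls c] e]. Qed.
Lemma a_coal_merge x p : a_coal (merge x p) = a_coal x \/ a_coal (merge x p) = incr_head (a_coal x).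
Proof. destruct x as [[ls c] e], p; rewrite merge_eq; simpl; destruct (_ || _); auto. Qed.

Lemma incr_head_app c d : c <> [] -> incr_head (c ++ d) = incr_head c ++ d.
Proof. now destruct c. Qed.

Lemma list_sum_incr_head c : c <> [] -> list_sum (incr_head c) = S (list_sum c).
Proof. now destruct c. Qed.

Lemma length_incr_head c : length (incr_head c) = length c.
Proof. now destruct c. Qed.

Lemma nth_rev_cons {A} i (x : A) l d : (i < length l)%nat -> nth i (rev (x :: l)) d = nth i (rev l) d.
Proof. intro H; simpl; rewrite app_nth1; auto; now rewrite length_rev. Qed.

Lemma nth_rev_incr_head i c d : (S i < length c)%nat -> nth i (rev (incr_head c)) d = nth i (rev c) d.
Proof.
  destruct c as [|x r]; simpl; intro H; [lia|]. rewrite !app_nth1; auto; rewrite length_rev; lia.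
Qed.

Lemma nth_rev_app {A} i (l1 l2 : list A) d : (length l2 <= i)%nat ->
  nth i (rev (l1 ++ l2)) d = nth (i - length l2) (rev l1) d.
Proof. intro H; rewrite rev_app_distr, app_nth2; rewrite length_rev; auto. Qed.

(* Exactly one lineage carries [a], none carries [b] yet, and the depth of [a] in its
   lineage is the total number of coalescences recorded into it: this is what turns the
   final [a]--[b] distance into [1 + sum_i X_i]. *)
Definition a_inv (x : state) : Prop :=
  countb (mem La) (lineages x) = 1%nat /\ (forall t, In t (lineages x) -> mem Lb t = false) /\
  (forall t, In t (lineages x) -> mem La t = true -> depth La t = list_sum (a_coal x)).

Lemma a_inv_close x : a_inv x -> a_inv (close_pop x).
Proof. now destruct x as [[ls c] e]. Qed.

Lemma a_inv_open x l :
  label_eqb La l = false -> label_eqb Lb l = false -> a_inv x -> a_inv (open_pop l x).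
Proof.
  destruct x as [[ls c] e]; unfold a_inv; cbn [open_pop lineages a_coal list_sum fold_right].
  intros Ha Hb [H1 [H2 H3]]; split; [|split].
  - rewrite countb_app, countb_cons; change (mem La (Leaf l)) with (label_eqb La l); rewrite Ha.
    cbn; lia.
  - intros t Ht; apply in_app_or in Ht as [Ht|[<-|[]]]; auto.
  - intros t Ht Hm; apply in_app_or in Ht as [Ht|[<-|[]]]; auto.
    change (label_eqb La l = true) in Hm; congruence.
Qed.

Lemma a_inv_merge x p : a_inv x -> a_coal x <> [] -> In p (pairs (nlin x)) -> a_inv (merge x p).
Proof.
  destruct x as [[ls c] e], p as [i j]; unfold a_inv; cbn [lineages a_coal nlin].
  intros [H1 [H2 H3]] Hc Hp; apply in_pairs in Hp; cbn [fst snd] in Hp.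
  rewrite merge_eq; cbn [lineages a_coal].
  set (ti := nth i ls (Leaf La)); set (tj := nth j ls (Leaf La)).
  assert (Hti : In ti ls) by (apply nth_In; lia).
  assert (Htj : In tj ls) by (apply nth_In; lia).
  pose proof (countb_remove2 (mem La) (Leaf La) i j ls ltac:(lia)) as Hcnt; fold ti tj in Hcnt.
  assert (Hrest : mem La ti || mem La tj = true -> countb (mem La) (remove2_from 0 i j ls) = 0%nat)
    by (destruct (mem La ti), (mem La tj); simpl in *; lia).
  split; [|split].
  - rewrite countb_app, countb_cons; cbn [mem]; destruct (mem La ti), (mem La tj); cbn in *; lia.
  - intros t Ht; apply in_app_or in Ht as [Ht|[<-|[]]].
    + eapply H2, in_remove2_from; eauto.
    + simpl; now rewrite (H2 ti Hti), (H2 tj Htj).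
  - intros t Ht Hm; destruct (mem La ti || mem La tj) eqn:Eij.
    + rewrite list_sum_incr_head by auto.
      apply in_app_or in Ht as [Ht|[<-|[]]].
      * now rewrite (countb_zero _ _ t (Hrest eq_refl) Ht) in Hm.
      * simpl; destruct (mem La ti) eqn:Ei; [now rewrite H3|].
        simpl in Eij; rewrite Eij; now rewrite H3.
    + apply orb_false_iff in Eij as [Ei Ej].
      apply in_app_or in Ht as [Ht|[<-|[]]].
      * apply H3; auto; eapply in_remove2_from; eauto.
      * simpl in Hm; rewrite Ei, Ej in Hm; discriminate.
Qed.

Lemma Fi_top_sizes i x : Fi i x = Nat.eqb (nth (2 * (i - 1) + 1) (rev (top_sizes x)) 0%nat) 1.
Proof. now destruct x as [[ls c] e]. Qed.

Lemma Fi_close i x : (2 * (i - 1) + 1 < length (top_sizes x))%nat -> Fi i (close_pop x) = Fi i x.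
Proof. intro H; now rewrite !Fi_top_sizes, top_sizes_close, nth_rev_cons. Qed.

(* Once block [j] is over, [F_j] is settled. *)
Lemma run_Fi_false sts j (h : state -> R) w : (1 <= j)%nat ->
  (forall x, (2 * j <= length (top_sizes x))%nat -> Fi j x = false -> h x = 0) ->
  (2 * j <= length (top_sizes w))%nat -> Fi j w = false -> run sts h w = 0.
Proof.
  intros Hj Hh Hw HF.
  set (I := fun x => (2 * j <= length (top_sizes x))%nat /\ Fi j x = false).
  rewrite <- (run_const sts 0 w); apply (run_inv I I); try now split.
  - intros l d x _ [H1 H2]; split; now rewrite ?Fi_top_sizes, top_sizes_open in *.
  - intros y p [H1 H2] _; split; now rewrite ?Fi_top_sizes, top_sizes_merge in *.
  - intros y [H1 H2]; split; [rewrite top_sizes_close; simpl; lia | rewrite Fi_close; auto; lia].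
  - intros x [H1 H2]; auto.
Qed.

Definition first_block (x : state) : nat * nat * nat :=
  (nth 0 (rev (a_coal x)) 0%nat, nth 1 (rev (a_coal x)) 0%nat, nth 1 (rev (top_sizes x)) 0%nat).

Lemma Xi1_first_block x : Xi 1 x = let '(u, v, _) := first_block x in INR (u + v).
Proof. now destruct x as [[ls c] e]. Qed.

Lemma Fi1_first_block x : Fi 1 x = let '(_, _, k) := first_block x in Nat.eqb k 1.
Proof. now destruct x as [[ls c] e]. Qed.

(* Later stages only push newer entries on the histories. *)
Lemma run_first_block sts (Phi : nat * nat * nat -> R) w :
  (2 <= length (a_coal w))%nat -> (2 <= length (top_sizes w))%nat ->
  run sts (fun x => Phi (first_block x)) w = Phi (first_block w).
Proof.
  intros Hc He.
  set (I := fun x => (2 <= length (a_coal x))%nat /\ (2 <= length (top_sizes x))%nat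
                     /\ first_block x = first_block w).
  set (Imid := fun x => (3 <= length (a_coal x))%nat /\ (2 <= length (top_sizes x))%nat
                        /\ first_block x = first_block w).
  rewrite <- (run_const sts (Phi (first_block w)) w).
  apply (run_inv I Imid); unfold I, Imid, first_block.
  - intros l d x _ [H1 [H2 H3]]; rewrite a_coal_open, top_sizes_open, !nth_rev_cons by lia.
    simpl length; repeat split; auto; lia.
  - intros x p [H1 [H2 H3]] _; rewrite top_sizes_merge.
    destruct (a_coal_merge x p) as [E|E]; rewrite E; auto.
    rewrite length_incr_head, !nth_rev_incr_head by lia; auto.
  - intros y [H1 [H2 H3]]; rewrite a_coal_close, top_sizes_close, nth_rev_cons by lia.
    simpl length; repeat split; auto; lia.
  - intros x [_ [_ H]]; now rewrite H.
  - now repeat split.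
Qed.

(* [x] is a copy of [x'] whose histories carry the extra older entries [cs] and [es]
   (and whose lineages may be labelled differently, as long as the lineage of [a] is
   at the same position): a block run from [x] is the first block run from [x']. *)
Definition shifted (cs es : list nat) (lc le : nat) (x x' : state) : Prop :=
  map (mem La) (lineages x) = map (mem La) (lineages x') /\ a_coal x = a_coal x' ++ cs /\
  top_sizes x = top_sizes x' ++ es /\ length (a_coal x') = lc /\ length (top_sizes x') = le /\
  a_inv x.

Lemma length_lineages_shifted cs es lc le x x' :
  shifted cs es lc le x x' -> length (lineages x) = length (lineages x').
Proof. intros [Hm _]; now rewrite <- (length_map (mem La)), Hm, length_map. Qed.

Lemma shifted_bisim cs es lc le : (1 <= lc)%nat -> bisim (shifted cs es lc le).
Proof.
  intros Hlc [[ls c] e] [[ls' c'] e'] Hx.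
  pose proof (length_lineages_shifted _ _ _ _ _ _ Hx) as Hlen.
  destruct Hx as [Hm [Hc [He [H1 [H2 HI]]]]]; cbn [lineages a_coal top_sizes] in *.
  split; [exact Hlen|]; intros [i j] Hp.
  assert (Hc' : c' <> []) by (intros ->; simpl in H1; lia).
  assert (HI' : a_inv (merge (ls, c, e) (i, j)))
    by (apply a_inv_merge; auto; simpl; subst c; destruct c'; [congruence | discriminate]).
  rewrite merge_eq in HI' |- *; rewrite merge_eq.
  assert (Eij : forall k, mem La (nth k ls (Leaf La)) = mem La (nth k ls' (Leaf La)))
    by (intro k; rewrite <- !(map_nth (mem La)); now rewrite Hm).
  unfold shifted; cbn [lineages a_coal top_sizes]; rewrite !Eij in *.
  split; [rewrite !map_app, !map_remove2_from, Hm; simpl; now rewrite !Eij|].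
  destruct (_ || _); (split; [|split; [|split; [|split]]]); subst c; auto using incr_head_app.
  now rewrite length_incr_head.
Qed.

Lemma shifted_open cs es lc le l l' x x' :
  label_eqb La l = false -> label_eqb Lb l = false -> label_eqb La l' = false ->
  shifted cs es lc le x x' -> shifted cs es (S lc) le (open_pop l x) (open_pop l' x').
Proof.
  intros Ha Hb Ha' [Hm [Hc [He [H1 [H2 HI]]]]].
  pose proof (a_inv_open x l Ha Hb HI).
  destruct x as [[ls c] e], x' as [[ls' c'] e']; unfold shifted in *.
  cbn [lineages a_coal top_sizes open_pop] in *.
  split; [|split; [now subst|split; [auto|split; [simpl; lia|split; auto]]]].
  rewrite !map_app, Hm; cbn [map]; change (mem La (Leaf l)) with (label_eqb La l).
  change (mem La (Leaf l')) with (label_eqb La l'); now rewrite Ha, Ha'.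
Qed.

Lemma shifted_close cs es lc le x x' :
  shifted cs es lc le x x' -> shifted cs es lc (S le) (close_pop x) (close_pop x').
Proof.
  intro Hx; pose proof (length_lineages_shifted _ _ _ _ _ _ Hx) as Hlen.
  destruct Hx as [Hm [Hc [He [H1 [H2 HI]]]]]; pose proof (a_inv_close x HI).
  destruct x as [[ls c] e], x' as [[ls' c'] e']; unfold shifted in *.
  cbn [lineages a_coal top_sizes close_pop] in *.
  split; [auto|split; [auto|split; [subst; now rewrite Hlen|split; [auto|split; [simpl; lia|auto]]]]].
Qed.

(** * Blocks of the caterpillar *)

Definition block (f g : R) (i : nat) : list stage := [(Lx i, Some f); (Ly i, Some g)].

Lemma caterpillar_stages_eq n f g :
  caterpillar_stages n f g = flat_map (block f g) (seq 1 (nblocks n)) ++ [(Lb, None)].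
Proof. reflexivity. Qed.

Definition s0 : state := ([Leaf La], [], []).

Lemma a_inv_single T cs es :
  a_inv ([T], cs, es) <-> mem La T = true /\ mem Lb T = false /\ depth La T = list_sum cs.
Proof.
  unfold a_inv; cbn [lineages a_coal]; rewrite countb_cons; unfold countb; simpl.
  split; [intros [H1 [H2 H3]] | intros [H1 [H2 H3]]].
  - assert (E : mem La T = true) by (destruct (mem La T); simpl in H1; congruence).
    repeat split; auto.
  - rewrite H1; repeat split; auto; intros t [<-|[]]; auto.
Qed.

Lemma run_block_shift f g j cs es T (G h' : state -> R) :
  a_inv ([T], cs, es) ->
  (forall z z', shifted cs es 2 1 z z' -> G (close_pop z) = h' (close_pop z')) ->
  run (block f g j) G ([T], cs, es) = run (block f g 1) h' s0.
Proof.
  intros HI HG; pose proof HI as HT; apply a_inv_single in HT as [HT _].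
  assert (H0 : shifted cs es 0 0 ([T], cs, es) s0)
    by (refine (conj _ (conj eq_refl (conj eq_refl (conj eq_refl (conj eq_refl HI)))));
        cbn; now rewrite HT).
  unfold block; cbn [run].
  apply (run_stage_bisim (shifted cs es 1 0)); [apply shifted_bisim; lia | now apply shifted_open|].
  intros y y' Hy; apply (run_stage_bisim (shifted cs es 2 1)); [apply shifted_bisim; lia| |auto].
  now apply shifted_open, shifted_close.
Qed.

Lemma Fi_shifted cs es lc le j w w' : (1 <= j)%nat -> length es = (2 * (j - 1))%nat ->
  shifted cs es lc le w w' -> Fi j w = Fi 1 w'.
Proof.
  intros Hj Hes [_ [_ [He _]]]; rewrite !Fi_top_sizes, He, nth_rev_app by lia.
  now replace (2 * (j - 1) + 1 - length es)%nat with 1%nat by lia.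
Qed.

Lemma Fi_close_shifted cs es lc j z z' : (1 <= j)%nat -> length es = (2 * (j - 1))%nat ->
  shifted cs es lc 1 z z' -> Fi j (close_pop z) = Nat.eqb (length (lineages z)) 1.
Proof.
  intros Hj Hes [_ [_ [He [_ [H2 _]]]]].
  rewrite Fi_top_sizes, top_sizes_close, He; destruct (top_sizes z') as [|a [|]]; simpl in H2; try lia.
  change (length (lineages z) :: [a] ++ es) with ([length (lineages z); a] ++ es).
  rewrite nth_rev_app by lia. now replace (2 * (j - 1) + 1 - length es)%nat with 1%nat by lia.
Qed.

Lemma list_sum_shifted cs es le w w' : shifted cs es 2 le w w' ->
  INR (list_sum (a_coal w)) = INR (list_sum cs) + Xi 1 w'.
Proof.
  destruct w' as [[ls' c'] e']; intros [_ [Hc [_ [H1 _]]]]; rewrite Hc; cbn [a_coal] in *.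
  destruct c' as [|u [|v [|]]]; simpl in H1; try lia.
  unfold Xi; simpl; rewrite <- plus_INR; f_equal; lia.
Qed.

(** * The one-block transfer operator *)

Definition on_Fall_dg (n : nat) (q : R -> R) (x : state) : R := ind (Fall n x) * q (dg_ab x).

(* [Kop Q X]: expectation over one block of [Q (X + X_1)] on the event [F_1]. *)
Definition Kop (n : nat) (f : R) (Q : R -> R) (X : R) : R :=
  run (block f (gbranch n) 1) (fun w => ind (Fi 1 w) * Q (X + Xi 1 w)) s0.

Definition Kiter (n : nat) (f : R) (k : nat) (Q : R -> R) : R -> R := Nat.iter k (Kop n f) Q.

Lemma Fall_spec n x : Fall n x = true <-> forall i, (1 <= i <= nblocks n)%nat -> Fi i x = true.
Proof.
  unfold Fall; rewrite forallb_forall.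
  split; intros H i Hi; apply H; apply in_seq in Hi || apply in_seq; lia.
Qed.

Lemma dg_ab_root T c e : mem La T = true -> mem Lb T = false ->
  dg_ab ([Node T (Leaf Lb)], c, e) = INR (depth La T) + 1.
Proof.
  intros Ha Hb; unfold dg_ab, gene_tree, udist; cbn [hd mem rdist depth]; rewrite Ha, Hb; simpl.
  now rewrite Nat.sub_0_r, plus_INR.
Qed.

Lemma run_root_stage n q T cs es : a_inv ([T], cs, es) -> length es = (2 * nblocks n)%nat ->
  (forall i, (1 <= i <= nblocks n)%nat -> Fi i ([T], cs, es) = true) ->
  run [(Lb, None)] (on_Fall_dg n q) ([T], cs, es) = q (INR (list_sum cs) + 1).
Proof.
  intros HI Hes HF; pose proof HI as HT; apply a_inv_single in HT as [HTa [HTb HTd]].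
  cbn [run]; rewrite run_stage_eq; simpl open_pop.
  rewrite absorb_ge2 by (simpl; lia).
  replace (pairs (nlin ([T; Leaf Lb], 0%nat :: cs, es))) with [(0%nat, 1%nat)] by reflexivity.
  replace (rate ([T; Leaf Lb], 0%nat :: cs, es)) with 1 by reflexivity.
  cbn [lsum fold_right]; rewrite merge_eq.
  replace (remove2_from 0 0 1 [T; Leaf Lb]) with (@nil gtree) by reflexivity.
  cbn [nth app]; rewrite HTa; cbn [orb incr_head].
  rewrite absorb_le1 by (simpl; lia); unfold on_Fall_dg; simpl close_pop.
  replace (Fall n _) with true.
  2:{ symmetry; apply Fall_spec; intros i Hi; rewrite <- (HF i Hi), !Fi_top_sizes; simpl top_sizes.
      rewrite nth_rev_cons; auto; lia. }
  rewrite dg_ab_root, HTd by auto. simpl ind; field.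
Qed.

Lemma Fi_app_top_sizes i j x y : (1 <= i < j)%nat ->
  (exists pre, top_sizes y = pre ++ top_sizes x) -> length (top_sizes x) = (2 * (j - 1))%nat ->
  Fi i y = Fi i x.
Proof.
  intros Hij [pre Hp] Hl; rewrite !Fi_top_sizes, Hp, rev_app_distr, app_nth1; auto.
  rewrite length_rev; lia.
Qed.

(* Each remaining block either fails, killing [1_F], or hands a single lineage to the
   next block after adding [X_j] to the depth of [a]. *)
Lemma run_tail_Kiter n f q k : forall j T cs es,
  (j + k = nblocks n + 1)%nat -> (1 <= j)%nat -> a_inv ([T], cs, es) ->
  length cs = (2 * (j - 1))%nat -> length es = (2 * (j - 1))%nat ->
  (forall i, (1 <= i < j)%nat -> Fi i ([T], cs, es) = true) ->
  run (flat_map (block f (gbranch n)) (seq j k) ++ [(Lb, None)]) (on_Fall_dg n q) ([T], cs, es) =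
  Kiter n f k (fun x => q (x + 1)) (INR (list_sum cs)).
Proof.
  induction k as [|k IH]; intros j T cs es Hjk Hj HI Hcs Hes HF.
  { apply run_root_stage; [auto | replace (nblocks n) with (j - 1)%nat by lia; auto|].
    intros i Hi; apply HF; lia. }
  cbn [seq flat_map]; rewrite <- app_assoc, run_app.
  change (Kiter n f (S k) ?Q ?X) with (Kop n f (Kiter n f k Q) X); unfold Kop.
  apply run_block_shift; auto; intros z z' Hz.
  pose proof (shifted_close _ _ _ _ _ _ Hz) as Hz1.
  rewrite <- (Fi_shifted _ _ _ _ j _ _ Hj Hes Hz1), (Fi_close_shifted _ _ _ j _ _ Hj Hes Hz).
  rewrite <- (list_sum_shifted _ _ _ _ _ Hz1), a_coal_close.
  destruct (Nat.eqb_spec (length (lineages z)) 1) as [E|E]; simpl ind;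
    [rewrite Rmult_1_l | rewrite Rmult_0_l].
  - assert (HFj : Fi j (close_pop z) = true)
      by (rewrite (Fi_close_shifted cs es 2 j z z' Hj Hes Hz); now apply Nat.eqb_eq).
    destruct z as [[ls c] e], Hz as [_ [Hc [He [H1 [H2 HI']]]]]; cbn [lineages a_coal top_sizes] in *.
    destruct ls as [|T' [|]]; simpl in E; try lia.
    apply IH; auto; try lia.
    + subst c; rewrite length_app; lia.
    + simpl; subst e; rewrite length_app; lia.
    + intros i Hi; destruct (Nat.eq_dec i j) as [->|Hne].
      * exact HFj.
      * rewrite (Fi_app_top_sizes i j ([T], cs, es)); [apply HF | | |]; simpl; auto; try lia.
        exists (1%nat :: top_sizes z'); now rewrite He.
  - apply (run_Fi_false _ j); auto.
    + intros x Hx HFx; unfold on_Fall_dg; replace (Fall n x) with false; [simpl; ring|].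
      symmetry; apply not_true_iff_false; rewrite Fall_spec; intro Hall.
      rewrite Hall in HFx; [discriminate | lia].
    + destruct Hz as [_ [_ [He [_ [H2 _]]]]].
      rewrite top_sizes_close, He; simpl; rewrite length_app; lia.
    + rewrite (Fi_close_shifted cs es 2 j z z' Hj Hes Hz); now apply Nat.eqb_neq.
Qed.

Lemma Ecat_Fall_dg n f q : Ecat n f (on_Fall_dg n q) = Kiter n f (nblocks n) (fun x => q (x + 1)) 0.
Proof.
  unfold Ecat; rewrite caterpillar_stages_eq; change 0 with (INR (list_sum [])).
  apply run_tail_Kiter; try (simpl; lia); now apply a_inv_single.
Qed.

(** * Expectations on the caterpillar *)

Lemma Ecat_ext n f h1 h2 : (forall x, h1 x = h2 x) -> Ecat n f h1 = Ecat n f h2.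
Proof. apply run_ext. Qed.

Lemma Ecat_lin n f a b h1 h2 :
  Ecat n f (fun x => a * h1 x + b * h2 x) = a * Ecat n f h1 + b * Ecat n f h2.
Proof. apply run_lin. Qed.

Lemma gbranch_nonneg n : (1 <= n)%nat -> 0 <= gbranch n.
Proof.
  intro H; unfold gbranch; assert (1 <= INR n) by (apply (le_INR 1); auto).
  destruct (Req_dec (INR n) 1) as [->|E]; [rewrite ln_1; lra|].
  assert (0 < ln (INR n)) by (rewrite <- ln_1; apply ln_increasing; lra). lra.
Qed.

Lemma Ecat_const n f c : Ecat n f (fun _ => c) = c.
Proof. apply run_const. Qed.

Lemma Ecat_nonneg n f h : 0 <= f -> (1 <= n)%nat -> (forall x, 0 <= h x) -> 0 <= Ecat n f h.
Proof.
  intros Hf Hn Hh; apply run_nonneg; auto; intros l t Hst.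
  pose proof (gbranch_nonneg n Hn).
  rewrite caterpillar_stages_eq in Hst; apply in_app_or in Hst as [Hst|[Hst|[]]]; [|discriminate].
  apply in_flat_map in Hst as [i [_ [Hi|[Hi|[]]]]]; injection Hi; intros; subst; auto.
Qed.

Lemma Ecat_mono n f h1 h2 : 0 <= f -> (1 <= n)%nat -> (forall x, h1 x <= h2 x) ->
  Ecat n f h1 <= Ecat n f h2.
Proof.
  intros Hf Hn H; pose proof (Ecat_nonneg n f (fun x => 1 * h2 x + -1 * h1 x) Hf Hn) as P.
  rewrite Ecat_lin in P; assert (0 <= 1 * Ecat n f h2 + -1 * Ecat n f h1); [|lra].
  apply P; intro x; pose proof (H x); lra.
Qed.

Lemma Var_cat_eq n f Y : Var_cat n f Y = Ecat n f (fun x => (Y x - Ecat n f Y) ^ 2).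
Proof.
  unfold Var_cat; set (mu := Ecat n f Y).
  rewrite (Ecat_ext n f (fun x => (Y x - mu) ^ 2)
                    (fun x => 1 * Y x ^ 2 + 1 * (- 2 * mu * Y x + mu ^ 2 * 1))) by (intro; ring).
  rewrite !Ecat_lin, Ecat_const; fold mu; ring.
Qed.

Lemma length_a_coal_merge x p : length (a_coal (merge x p)) = length (a_coal x).
Proof. destruct (a_coal_merge x p) as [E|E]; rewrite E; auto using length_incr_head. Qed.

Lemma Ecat_first_block n f (G : R -> bool -> R) : (1 <= nblocks n)%nat ->
  Ecat n f (fun x => G (Xi 1 x) (Fi 1 x)) = run (block f (gbranch n) 1) (fun x => G (Xi 1 x) (Fi 1 x)) s0.
Proof.
  intro Hm; set (Phi := fun b : nat * nat * nat => let '(u, v, k) := b in G (INR (u + v)) (Nat.eqb k 1)).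
  assert (E : forall x, G (Xi 1 x) (Fi 1 x) = Phi (first_block x))
    by (intro x; rewrite Xi1_first_block, Fi1_first_block; now destruct (first_block x) as [[u v] k]).
  rewrite (Ecat_ext _ _ _ _ E), (run_ext _ _ _ _ E).
  unfold Ecat; rewrite caterpillar_stages_eq; destruct (nblocks n) as [|m'] eqn:Em; [lia|].
  cbn [seq flat_map]; rewrite <- app_assoc, run_app; unfold block; cbn [run].
  assert (HM : forall k l y p, length (a_coal y) = k /\ length (top_sizes y) = l ->
                 length (a_coal (merge y p)) = k /\ length (top_sizes (merge y p)) = l)
    by (intros k l y p; now rewrite length_a_coal_merge, top_sizes_merge).
  apply (run_stage_inv (fun x => length (a_coal x) = 1%nat /\ length (top_sizes x) = 0%nat));
    [intros; now apply HM | now split|]; intros y [H1 H2].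
  apply (run_stage_inv (fun x => length (a_coal x) = 2%nat /\ length (top_sizes x) = 1%nat));
    [intros; now apply HM
    | rewrite a_coal_open, top_sizes_open, a_coal_close, top_sizes_close; simpl; lia|].
  intros z [H3 H4]; apply run_first_block; [rewrite a_coal_close | rewrite top_sizes_close; simpl]; lia.
Qed.

Definition block_moment (n : nat) (f : R) (j : nat) : R :=
  run (block f (gbranch n) 1) (fun w => ind (Fi 1 w) * Xi 1 w ^ j) s0.

Lemma Ecat_block_moment n f j : (1 <= nblocks n)%nat ->
  Ecat n f (fun x => ind (Fi 1 x) * Xi 1 x ^ j) = block_moment n f j.
Proof. intro Hm; exact (Ecat_first_block n f (fun y b => ind b * y ^ j) Hm). Qed.

Lemma Kop_quadratic n f c0 c1 c2 X :
  Kop n f (fun y => c0 + c1 * y + c2 * y ^ 2) X =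
  c0 * block_moment n f 0 + c1 * (block_moment n f 0 * X + block_moment n f 1)
  + c2 * (block_moment n f 0 * X ^ 2 + 2 * X * block_moment n f 1 + block_moment n f 2).
Proof.
  unfold Kop, block_moment.
  rewrite (run_ext _ _ (fun w => (c0 + c1 * X + c2 * X ^ 2) * (ind (Fi 1 w) * Xi 1 w ^ 0) +
             1 * ((c1 + 2 * c2 * X) * (ind (Fi 1 w) * Xi 1 w ^ 1) + c2 * (ind (Fi 1 w) * Xi 1 w ^ 2))))
    by (intro; ring).
  rewrite !run_lin; ring.
Qed.

Lemma Kop_ext n f Q1 Q2 X : (forall y, Q1 y = Q2 y) -> Kop n f Q1 X = Kop n f Q2 X.
Proof. intro H; f_equal; now apply functional_extensionality. Qed.

Lemma Kiter_one n f k X : Kiter n f k (fun _ => 1) X = block_moment n f 0 ^ k.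
Proof.
  revert X; induction k; intro X; [reflexivity|].
  change (Kop n f (Kiter n f k (fun _ => 1)) X = block_moment n f 0 ^ S k).
  rewrite (Kop_ext n f _ (fun y => block_moment n f 0 ^ k + 0 * y + 0 * y ^ 2))
    by (intro; rewrite IHk; ring).
  rewrite Kop_quadratic; simpl; ring.
Qed.

(* Second moment of [X + d + X_1 + ... + X_k] on [F_1 /\ ... /\ F_k]: the blocks are
   i.i.d. given success, so the mean grows by [mu] and the variance by [v] per block. *)
Lemma Kiter_sq n f d : block_moment n f 0 <> 0 -> forall k X,
  let P := block_moment n f 0 in
  let mu := block_moment n f 1 / P in
  let v := block_moment n f 2 / P - mu ^ 2 in
  Kiter n f k (fun x => (x + d) ^ 2) X = P ^ k * ((X + d + INR k * mu) ^ 2 + INR k * v).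
Proof.
  intros HP k; induction k; intros X P mu v; [simpl; ring|].
  change (Kop n f (Kiter n f k (fun x => (x + d) ^ 2)) X
          = P ^ S k * ((X + d + INR (S k) * mu) ^ 2 + INR (S k) * v)).
  rewrite (Kop_ext n f _ (fun y => P ^ k * ((d + INR k * mu) ^ 2 + INR k * v)
                                   + (2 * P ^ k * (d + INR k * mu)) * y + P ^ k * y ^ 2))
    by (intro; rewrite IHk; fold P mu v; ring).
  rewrite Kop_quadratic; fold P; unfold v, mu; rewrite S_INR; simpl; field; auto.
Qed.

Lemma Prob_Fall n f : Prob_cat n f (Fall n) = block_moment n f 0 ^ nblocks n.
Proof.
  unfold Prob_cat; rewrite (Ecat_ext n f _ (on_Fall_dg n (fun _ => 1)))
    by (intro; unfold on_Fall_dg; ring).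
  now rewrite Ecat_Fall_dg, Kiter_one.
Qed.

Lemma Ecat_sq_dev_Fall n f c : block_moment n f 0 <> 0 ->
  let P := block_moment n f 0 in
  let mu := block_moment n f 1 / P in
  let v := block_moment n f 2 / P - mu ^ 2 in
  Ecat n f (fun x => (dg_ab x - c) ^ 2 * ind (Fall n x))
  = P ^ nblocks n * ((1 - c + INR (nblocks n) * mu) ^ 2 + INR (nblocks n) * v).
Proof.
  intros HP P mu v.
  rewrite (Ecat_ext n f _ (on_Fall_dg n (fun y => (y - c) ^ 2))) by (intro; unfold on_Fall_dg; ring).
  rewrite Ecat_Fall_dg; cbv beta.
  replace (fun x => (x + 1 - c) ^ 2) with (fun x => (x + (1 - c)) ^ 2)
    by (apply functional_extensionality; intro; ring).
  rewrite Kiter_sq by auto; fold P mu v; f_equal; ring.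
Qed.

Lemma CondVar_Xi1 n f : (1 <= nblocks n)%nat ->
  CondVar_cat n f (Xi 1) (Fi 1) =
  block_moment n f 2 / block_moment n f 0 - (block_moment n f 1 / block_moment n f 0) ^ 2.
Proof.
  intro Hm; unfold CondVar_cat, Prob_cat.
  rewrite (Ecat_ext n f (fun s => Xi 1 s ^ 2 * ind (Fi 1 s)) (fun x => ind (Fi 1 x) * Xi 1 x ^ 2)),
    (Ecat_ext n f (fun s => Xi 1 s * ind (Fi 1 s)) (fun x => ind (Fi 1 x) * Xi 1 x ^ 1)),
    (Ecat_ext n f (fun s => ind (Fi 1 s)) (fun x => ind (Fi 1 x) * Xi 1 x ^ 0)) by (intro; ring).
  now rewrite !Ecat_block_moment.
Qed.

Lemma nblocks_eq n : (4 <= n)%nat -> Nat.Even n ->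
  (INR n - 2) / 2 = INR (nblocks n) /\ (1 <= nblocks n)%nat.
Proof.
  intros H4 [r ->]; unfold nblocks.
  replace (2 * r - 2)%nat with ((r - 1) * 2)%nat by lia; rewrite Nat.div_mul by lia.
  split; [|lia]. rewrite minus_INR, mult_INR by lia; simpl; field.
Qed.

Theorem lemma3 (n : nat) (f : R) :
  (4 <= n)%nat -> Nat.Even n -> 0 < f ->
  Var_cat n f dg_ab >=
    (INR n - 2) / 2 * CondVar_cat n f (Xi 1) (Fi 1) * Prob_cat n f (Fall n).
Proof.
  intros H4 Hev Hf; destruct (nblocks_eq n H4 Hev) as [-> Hm].
  assert (Hn : (1 <= n)%nat) by lia; assert (Hf0 : 0 <= f) by lra.
  rewrite Prob_Fall, Var_cat_eq; apply Rle_ge.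
  set (mud := Ecat n f dg_ab); set (P := block_moment n f 0).
  assert (HP0 : 0 <= P).
  { unfold P; rewrite <- Ecat_block_moment by auto.
    apply Ecat_nonneg; auto; intro x; unfold ind; destruct (Fi 1 x); simpl; lra. }
  destruct (Req_dec P 0) as [HP|HP].
  { rewrite HP, pow_i, Rmult_0_r by lia. apply Ecat_nonneg; auto; intro; apply pow2_ge_0. }
  rewrite CondVar_Xi1 by auto; fold P.
  assert (Hrestrict : Ecat n f (fun x => (dg_ab x - mud) ^ 2 * ind (Fall n x))
                      <= Ecat n f (fun x => (dg_ab x - mud) ^ 2)).
  { apply Ecat_mono; auto; intro x; pose proof (pow2_ge_0 (dg_ab x - mud)).
    unfold ind; destruct (Fall n x); lra. }
  rewrite (Ecat_sq_dev_Fall n f mud HP) in Hrestrict; fold P in Hrestrict.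
  eapply Rle_trans; [|exact Hrestrict].
  assert (0 <= P ^ nblocks n * (1 - mud + INR (nblocks n) * (block_moment n f 1 / P)) ^ 2)
    by (apply Rmult_le_pos; [now apply pow_le | apply pow2_ge_0]).
  nra.
Qed.
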